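(* Fix parameters $\tau\in(0,1/100)$ and $M\ge2$, and let $\theta=2+\tau$. Let $G=(\mu,\mathcal{V},\mathcal{W},\mathcal{E},\mathcal{P},f,g)$ be a maximal, non-trivial and structured GCD graph, let $p\in\mathcal{R}(G)$ be a prime with $p>C_6$, and let $k_p\in\mathbb{Z}$ be such that \[ \big(\operatorname{e}_p(v),\operatorname{e}_p(w)\big)\in\big\{(k_p-1,k_p),(k_p,k_p-1),(k_p,k_p),(k_p,k_p+1),(k_p+1,k_p)\big\} \] for all $(v,w)\in\mathcal{E}$. Then there is a non-trivial and maximal GCD subgraph $G'$ of $G$ with multiplicative data $(\mathcal{P}',f',g')$ such that: (a) $\mathcal{P}'=\mathcal{P}\cup\{p\}$; (b) $\mathcal{R}(G')\subseteq\mathcal{R}(G)\setminus\{p\}$; (c) $f'(p),g'(p)\in\{k_p-1,k_p,k_p+1\}$; (d) if $k_p>0$, then $G'$ is a denominator-exact GCD subgraph of $G$, whereas if $k_p<0$, then $G'$ is a numerator-exact GCD subgraph of $G$; (e) $q(G')\geqslant q(G) \big(1-\mathbbm{1}_{f'(p)=g'(p)=k_p}/p\big)^2 \big(1-1/p^{1+\frac{\tau}{4}} \big)$.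
   Context: For a prime $p$, $k\in\mathbb{Z}$ and $\rho\in\mathbb{Q}_{>0}$, write $\operatorname{e}_p(\rho)=k$ if $\rho=p^ka/q$ with $a,q\in\mathbb{N}$, $p\nmid aq$. For real $t$, $t^+=\max\{t,0\}$, $t^-=\max\{-t,0\}$. Weighted bipartite graph: $(\mu,\mathcal{V},\mathcal{W},\mathcal{E})$ with $\mu:\mathbb{R}_{>0}\to\mathbb{R}_{>0}$, $\mathcal{V},\mathcal{W}$ finite sets of positive reals, $\mathcal{E}\subseteq\mathcal{V}\times\mathcal{W}$; $\mu(\mathcal{T})=\sum_{t\in\mathcal{T}}\mu(t)$, $\mu(\mathcal{E})=\sum_{(v,w)\in\mathcal{E}}\mu(v)\mu(w)$; edge density $\delta=\mu(\mathcal{E})/(\mu(\mathcal{V})\mu(\mathcal{W}))$ if $\mathcal{E}\neq\emptyset$, else $0$; $\mu^{(\theta)}=\delta^\theta\mu(\mathcal{V})\mu(\mathcal{W})$. A subgraph has $\mathcal{V}'\subseteq\mathcal{V}$, $\mathcal{W}'\subseteq\mathcal{W}$, $\mathcal{E}'\subseteq\mathcal{E}\cap(\mathcal{V}'\times\mathcal{W}')$, same $\mu$. ''Maximal'' means $\mu^{(\theta)}(G)\ge\mu^{(\theta)}(G')$ for every subgraph $G'$ (with $\theta=2+\tau$). GCD graph: a septuple $G=(\mu,\mathcal{V},\mathcal{W},\mathcal{E},\mathcal{P},f,g)$ where $(\mu,\mathcal{V},\mathcal{W},\mathcal{E})$ is a weighted bipartite graph with $\mathcal{V},\mathcal{W}\subset\mathbb{Q}_{>0}$,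 $\mathcal{P}$ is a set of primes ($(\mathcal{P},f,g)$ is the ''multiplicative data''), $f,g:\mathcal{P}\to\mathbb{Z}$, and for all $p\in\mathcal{P}$ and all $(a/q,b/r)\in\mathcal{V}\times\mathcal{W}$ with $\gcd(a,q)=\gcd(b,r)=1$: $p^{f^+(p)}\mid a$, $p^{g^+(p)}\mid b$, $p^{f^-(p)}\mid q$, $p^{g^-(p)}\mid r$, and if $(a/q,b/r)\in\mathcal{E}$ then the exact power of $p$ dividing $\gcd(a,b)$ is $p^{\min\{f^+(p),g^+(p)\}}$ and that dividing $\gcd(q,r)$ is $p^{\min\{f^-(p),g^-(p)\}}$. $G$ is non-trivial if $\mathcal{E}\neq\emptyset$. Quality: $q(G)=\mu^{(\theta)}(G)\prod_{p\in\mathcal{P}}p^{|f(p)-g(p)|}$. A GCD subgraph $G'=(\mu,\mathcal{V}',\mathcal{W}',\mathcal{E}',\mathcal{P}',f',g')$ of $G$ has $\mathcal{V}'\subseteq\mathcal{V}$, $\mathcal{W}'\subseteq\mathcal{W}$, $\mathcal{E}'\subseteq\mathcal{E}$, $\mathcal{P}'\supseteq\mathcal{P}$, $f'|_{\mathcal{P}}=f$, $g'|_{\mathcal{P}}=g$. It is numerator-exact if for every $p\in\mathcal{P}'\setminus\mathcal{P}$ and every $(a/q,b/r)\in\mathcal{V}'\times\mathcal{W}'$ in lowest terms, $p^{f'^+(p)}$ exactly divides $a$ and $p^{g'^+(p)}$ exactly divides $b$; it is denominator-exact if for every such $p$ and $(a/q,b/r)$, $p^{f'^-(p)}$ exactly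 divides $q$ and $p^{g'^-(p)}$ exactly divides $r$. $\mathcal{R}(G)$ is the set of primes $p\notin\mathcal{P}$ for which there is $(a/q,b/r)\in\mathcal{E}$ with $\gcd(a,q)=\gcd(b,r)=1$ and $p\mid\gcd(a,b)\gcd(q,r)$. $G$ is structured if for each $p\in\mathcal{R}(G)$ there is $k\in\mathbb{Z}$ with $(\operatorname{e}_p(v)-k,\operatorname{e}_p(w)-k)\in\{(-1,0),(0,-1),(0,0),(0,1),(1,0)\}$ for all $(v,w)\in\mathcal{E}$. Constants: $C_1=10^4/\tau$, $C_2=10MC_1^3$, $C_4=10^{10}M^2C_2^2$, $C_6=\max\{C_4,10^4MC_2,C_2^{10/\tau}\}$. *)

From HB Require Import structures.
From mathcomp Require Import all_boot all_order all_algebra.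
From mathcomp Require Import finmap.
From mathcomp Require Import all_classical all_reals all_analysis.
Set Implicit Arguments. Unset Strict Implicit. Unset Printing Implicit Defensive.
Import Order.TTheory GRing.Theory Num.Theory.
Local Open Scope ring_scope.


Definition num (r : rat) : nat := `|numq r|%N.
Definition den (r : rat) : nat := `|denq r|%N.

Definition ep (p : nat) (r : rat) : int :=
  (logn p (num r))%:Z - (logn p (den r))%:Z.

Definition ipos (z : int) : nat := `|Num.max z 0|%N.
Definition ineg (z : int) : nat := `|Num.max (- z) 0|%N.

(* data of a GCD graph (the weight mu is kept separate, shared by subgraphs) *)
Record gdata := GData {
  gV : {fset rat};
  gW : {fset rat};
  gE : {fset (rat * rat)};
  gP : {fset nat};
  gf : nat -> int;
  gg : nat -> int }.

Definition is_gcd_graph (G : gdata) : Prop :=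
  [/\ (forall v, v \in gV G -> 0 < v) /\ (forall w, w \in gW G -> 0 < w),
      (forall e, e \in gE G -> e.1 \in gV G /\ e.2 \in gW G),
      (forall p, p \in gP G -> prime p),
      (forall p v w, p \in gP G -> v \in gV G -> w \in gW G ->
         [/\ (p ^ ipos (gf G p) %| num v)%N, (p ^ ipos (gg G p) %| num w)%N,
             (p ^ ineg (gf G p) %| den v)%N & (p ^ ineg (gg G p) %| den w)%N])
    & (forall p v w, p \in gP G -> (v, w) \in gE G ->
         logn p (gcdn (num v) (num w)) = minn (ipos (gf G p)) (ipos (gg G p)) /\
         logn p (gcdn (den v) (den w)) = minn (ineg (gf G p)) (ineg (gg G p)))].

Section Weights.
Variable R : realType.
Variable mu : rat -> R.

Definition msum (T : {fset rat}) : R := \sum_(t <- T) mu t.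
Definition medge (E : {fset (rat * rat)}) : R := \sum_(e <- E) mu e.1 * mu e.2.
Definition density (V W : {fset rat}) (E : {fset (rat * rat)}) : R :=
  if E == fset0 then 0 else medge E / (msum V * msum W).
Definition mutheta (th : R) (V W : {fset rat}) (E : {fset (rat * rat)}) : R :=
  density V W E `^ th * msum V * msum W.

Definition maximal (th : R) (G : gdata) : Prop :=
  forall (V' W' : {fset rat}) (E' : {fset (rat * rat)}),
    fsubset V' (gV G) -> fsubset W' (gW G) ->
    (forall e, e \in E' -> [/\ e \in gE G, e.1 \in V' & e.2 \in W']) ->
    mutheta th V' W' E' <= mutheta th (gV G) (gW G) (gE G).

Definition quality (th : R) (G : gdata) : R :=
  mutheta th (gV G) (gW G) (gE G) *
  \prod_(p <- gP G) (p%:R : R) ^+ `|gf G p - gg G p|%N.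

Definition C1 (tau : R) : R := 10 ^+ 4 / tau.
Definition C2 (tau M : R) : R := 10 * M * C1 tau ^+ 3.
Definition C4 (tau M : R) : R := 10 ^+ 10 * M ^+ 2 * C2 tau M ^+ 2.
Definition C6 (tau M : R) : R :=
  Num.max (Num.max (C4 tau M) (10 ^+ 4 * M * C2 tau M)) (C2 tau M `^ (10 / tau)).
End Weights.

(* G' is a GCD subgraph of G (G' itself being a GCD graph is required separately) *)
Definition gcd_subgraph (G' G : gdata) : Prop :=
  [/\ fsubset (gV G') (gV G), fsubset (gW G') (gW G), fsubset (gE G') (gE G),
      fsubset (gP G) (gP G')
    & forall p, p \in gP G -> gf G' p = gf G p /\ gg G' p = gg G p].

Definition numerator_exact (G' G : gdata) : Prop :=
  forall p v w, p \in gP G' -> p \notin gP G -> v \in gV G' -> w \in gW G' ->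
    logn p (num v) = ipos (gf G' p) /\ logn p (num w) = ipos (gg G' p).

Definition denominator_exact (G' G : gdata) : Prop :=
  forall p v w, p \in gP G' -> p \notin gP G -> v \in gV G' -> w \in gW G' ->
    logn p (den v) = ineg (gf G' p) /\ logn p (den w) = ineg (gg G' p).

Definition inR (G : gdata) (p : nat) : Prop :=
  [/\ prime p, p \notin gP G &
      exists v w, (v, w) \in gE G /\
        (p %| gcdn (num v) (num w) * gcdn (den v) (den w))%N].

Definition close_pair (a b : int) : bool :=
  (a, b) \in [:: (-1, 0); (0, -1); (0, 0); (0, 1); (1, 0)].

Definition structured (G : gdata) : Prop :=
  forall p, inR G p -> exists k : int,
    forall v w, (v, w) \in gE G -> close_pair (ep p v - k) (ep p w - k).

From Pilot Require Import Defs.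

From HB Require Import structures.
From mathcomp Require Import all_boot all_order all_algebra.
From mathcomp Require Import finmap.
From mathcomp Require Import all_classical all_reals all_analysis.
From mathcomp Require Import zify ring lra.
Set Implicit Arguments. Unset Strict Implicit. Unset Printing Implicit Defensive.
Import Order.TTheory GRing.Theory Num.Theory.
Local Open Scope ring_scope.
Import Defs. (* [num] of the statement, shadowed by the analysis library *)

(** Since [p] divides a gcd along some edge, [k <> 0]; let [a] be the neighbour of [k]
    nearer to [0]. Along every edge the valuations at [p] are [k] and [k], or [k] and
    [k +- 1], so either both ends lie beyond [a] (valuation [k] or further from [0]) or
    exactly one end has valuation [a]. Restricting [G] to one of these three classes of
    edges, with [f(p)] and [g(p)] the corresponding values in [{k, a}], gives a GCD subgraph
    that is exact at [p], since none of its valuations has the sign opposite to [k]; a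
    maximal subgraph of it is the required [G'].
    The two mixed classes gain the factor [p] from [|f(p) - g(p)| = 1]. If neither pays off,
    each has edge share [u] and [a]-side vertex share [X] with [u^theta p <= X^(theta-1)].
    Then [u <= p^(-1/theta)], and Young's inequality gives
    [theta u / (1 - u - v) <= (theta - 1) X + O(1/p)]: the edge mass lost by the remaining
    class is paid for by the vertex mass it loses, up to [(1 - 1/p)^2 (1 - p^(-1-tau/4))]. *)

Lemma num_gt0 (r : rat) : 0 < r -> (0 < num r)%N.
Proof. by move=> r_gt0; rewrite /num absz_gt0 gt_eqF ?numq_gt0. Qed.

Lemma den_gt0 (r : rat) : (0 < den r)%N.
Proof. by rewrite /den absz_gt0 gt_eqF ?denq_gt0. Qed.

Lemma logn_num_den_eq0 (p : nat) (r : rat) : prime p ->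
  (logn p (num r) == 0)%N || (logn p (den r) == 0)%N.
Proof.
move=> p_pr; case: posnP => //= /[!(logn_gt0, mem_primes)] /and3P[_ _ p_num].
case: posnP => //= /[!(logn_gt0, mem_primes)] /and3P[_ _ p_den].
have : (p %| gcdn (num r) (den r))%N by rewrite dvdn_gcd p_num.
by rewrite (eqP (coprime_num_den r)) dvdn1 => /eqP p1; rewrite p1 in p_pr.
Qed.

Lemma logn_num (p : nat) (r : rat) : prime p -> logn p (num r) = ipos (ep p r).
Proof. by move=> /(logn_num_den_eq0 r); rewrite /ep /ipos => /orP[]/eqP->; lia. Qed.

Lemma logn_den (p : nat) (r : rat) : prime p -> logn p (den r) = ineg (ep p r).
Proof. by move=> /(logn_num_den_eq0 r); rewrite /ep /ineg => /orP[]/eqP->; lia. Qed.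

Lemma logn_gcd_num (p : nat) (v w : rat) : prime p -> 0 < v -> 0 < w ->
  logn p (gcdn (num v) (num w)) = minn (ipos (ep p v)) (ipos (ep p w)).
Proof. by move=> p_pr v_gt0 w_gt0; rewrite logn_gcd ?num_gt0 ?logn_num. Qed.

Lemma logn_gcd_den (p : nat) (v w : rat) : prime p ->
  logn p (gcdn (den v) (den w)) = minn (ineg (ep p v)) (ineg (ep p w)).
Proof. by move=> p_pr; rewrite logn_gcd ?den_gt0 ?logn_den. Qed.

Lemma edge_dvd_val_pos (p : nat) (v w : rat) : prime p -> 0 < v -> 0 < w ->
  (p %| gcdn (num v) (num w) * gcdn (den v) (den w))%N ->
  (0 < minn (ipos (ep p v)) (ipos (ep p w)) + minn (ineg (ep p v)) (ineg (ep p w)))%N.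
Proof.
move=> p_prime v_gt0 w_gt0 p_dvd.
have num_gcd_gt0 : (0 < gcdn (num v) (num w))%N by rewrite gcdn_gt0 num_gt0.
have den_gcd_gt0 : (0 < gcdn (den v) (den w))%N by rewrite gcdn_gt0 den_gt0.
have : (0 < logn p (gcdn (num v) (num w) * gcdn (den v) (den w)))%N.
  by rewrite logn_gt0 mem_primes p_prime muln_gt0 num_gcd_gt0 den_gcd_gt0.
by rewrite lognM // logn_gcd_num // logn_gcd_den.
Qed.

(** The conditions that [f(p) = a] imposes on a vertex of valuation [x], and that
    [f(p) = a], [g(p) = b] impose on an edge whose ends have valuations [x], [y]. *)
Definition val_dvd (a x : int) : Prop := (ipos a <= ipos x)%N /\ (ineg a <= ineg x)%N.

Definition val_gcd (a b x y : int) : Prop :=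
  minn (ipos x) (ipos y) = minn (ipos a) (ipos b) /\
  minn (ineg x) (ineg y) = minn (ineg a) (ineg b).

Definition val_exact (k a x : int) : Prop :=
  (0 < k -> ineg x = ineg a) /\ (k < 0 -> ipos x = ipos a).

Definition near_pair (k x y : int) : bool :=
  (x, y) \in [:: (k - 1, k); (k, k - 1); (k, k); (k, k + 1); (k + 1, k)].

Lemma near_pairP (k x y : int) : near_pair k x y ->
  [\/ x = k - 1 /\ y = k, x = k /\ y = k - 1, x = k /\ y = k |
      x = k /\ y = k + 1 \/ x = k + 1 /\ y = k].
Proof.
rewrite /near_pair !inE !xpair_eqE.
by case/orP=> [|/orP[|/orP[|/orP[]]]] /andP[/eqP-> /eqP->];
  [apply: Or41 | apply: Or42 | apply: Or43 | apply/Or44/or_introl | apply/Or44/or_intror].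
Qed.

Lemma near_pair_neighbour (k x y : int) : near_pair k x y ->
  (0 < minn (ipos x) (ipos y) + minn (ineg x) (ineg y))%N ->
  exists2 a, a \in [:: k - 1; k + 1] & (a - k) * k < 0.
Proof.
rewrite /ipos /ineg => /near_pairP xy gcd_gt0.
have [k_gt0|k_le0] := ltP 0 k; [exists (k - 1) | exists (k + 1)];
  rewrite ?inE ?eqxx ?orbT //;
  by case: xy gcd_gt0 => [[-> ->]|[-> ->]|[-> ->]|[[-> ->]|[-> ->]]]; lia.
Qed.

(** [beyond k a x]: [x] is [k] or lies on the side of [k] away from [a]. *)
Definition beyond (k a x : int) : bool := (x - k) * (a - k) <= 0.

Section Neighbour.
Variables k a : int.
Hypotheses (a_near : a \in [:: k - 1; k + 1]) (a_toward0 : (a - k) * k < 0).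

Lemma beyond_val_dvd x : beyond k a x -> val_dvd k x.
Proof.
by move: a_near a_toward0; rewrite /beyond /val_dvd /ipos /ineg !inE => /orP[]/eqP-> ? ?; lia.
Qed.

Lemma beyond_val_exact x : beyond k a x -> val_exact k k x.
Proof.
by move: a_near a_toward0; rewrite /beyond /val_exact /ipos /ineg !inE => /orP[]/eqP-> ? ?; lia.
Qed.

Lemma beyond_neq x : beyond k a x -> x != a.
Proof. by move: a_near a_toward0; rewrite /beyond !inE => /orP[]/eqP-> ? ?; lia. Qed.

Lemma near_pair_cases x y : near_pair k x y ->
  [|| beyond k a x && beyond k a y, (x == a) && beyond k a y | beyond k a x && (y == a)].
Proof.
move: a_near a_toward0; rewrite /beyond !inE => /orP[]/eqP-> ?;
  by case/near_pairP=> [[-> ->]|[-> ->]|[-> ->]|[[-> ->]|[-> ->]]]; lia.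
Qed.

Lemma near_pair_gcd x y : near_pair k x y ->
  [/\ beyond k a x -> beyond k a y -> val_gcd k k x y,
      x = a -> beyond k a y -> val_gcd a k x y &
      beyond k a x -> y = a -> val_gcd k a x y].
Proof.
move: a_near a_toward0; rewrite /beyond /val_gcd /ipos /ineg !inE => /orP[]/eqP-> ?;
  by case/near_pairP=> [[-> ->]|[-> ->]|[-> ->]|[[-> ->]|[-> ->]]]; split; lia.
Qed.

End Neighbour.

Definition edges_within (V W : {fset rat}) (E : {fset (rat * rat)}) : Prop :=
  forall e, e \in E -> e.1 \in V /\ e.2 \in W.

Definition refine (G : gdata) (p : nat) (a b : int) (V W : {fset rat})
    (E : {fset (rat * rat)}) : gdata :=
  GData V W E (gP G `|` [fset p])%fset
    (fun r => if r == p then a else gf G r) (fun r => if r == p then b else gg G r).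

Section Refine.
Variables (G : gdata) (p : nat) (a b : int).
Variables (V W : {fset rat}) (E : {fset (rat * rat)}).
Hypotheses (p_prime : prime p) (p_notin : p \notin gP G).
Hypotheses (sub_V : fsubset V (gV G)) (sub_W : fsubset W (gW G)) (sub_E : fsubset E (gE G)).

Let neq_p r : r \in gP G -> (r == p) = false.
Proof. by move=> rP; apply/negbTE; apply: contraNneq p_notin => <-. Qed.

Lemma refine_gcd_graph : is_gcd_graph G -> edges_within V W E ->
  (forall v, v \in V -> val_dvd a (ep p v)) -> (forall w, w \in W -> val_dvd b (ep p w)) ->
  (forall v w, (v, w) \in E -> val_gcd a b (ep p v) (ep p w)) ->
  is_gcd_graph (refine G p a b V W E).
Proof.
move=> [[V_gt0 W_gt0] _ P_prime G_dvd G_gcd] E_ends dvd_V dvd_W gcd_E.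
have inV v : v \in V -> v \in gV G by apply: (fsubsetP sub_V).
have inW w : w \in W -> w \in gW G by apply: (fsubsetP sub_W).
have inE e : e \in E -> e \in gE G by apply: (fsubsetP sub_E).
split => /=.
- by split=> [v /inV /V_gt0 | w /inW /W_gt0].
- exact: E_ends.
- by move=> r; rewrite in_fsetU in_fset1 => /orP[/P_prime | /eqP->].
- move=> r v w; rewrite in_fsetU in_fset1 => /orP[rP | /eqP->] vV wW.
    by rewrite neq_p //; apply: G_dvd => //; [apply: inV | apply: inW].
  have [v_gt0 w_gt0] := (V_gt0 _ (inV _ vV), W_gt0 _ (inW _ wW)).
  rewrite eqxx !pfactor_dvdn ?num_gt0 ?den_gt0 // !logn_num // !logn_den //.
  by have [? ?] := dvd_V _ vV; have [? ?] := dvd_W _ wW; split.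
- move=> r v w; rewrite in_fsetU in_fset1 => /orP[rP | /eqP->] vwE.
    by rewrite neq_p //; apply: G_gcd => //; apply: inE.
  have [/inV /V_gt0 v_gt0 /inW /W_gt0 w_gt0] := E_ends _ vwE.
  by rewrite eqxx logn_gcd_num // logn_gcd_den //; apply: gcd_E.
Qed.

Lemma refine_subgraph : gcd_subgraph (refine G p a b V W E) G.
Proof. by split=> //=; [apply: fsubsetUl | move=> r /neq_p->]. Qed.

Lemma refine_inR r : inR (refine G p a b V W E) r -> inR G r /\ r <> p.
Proof.
move=> [r_prime /=]; rewrite in_fsetU in_fset1 negb_or => /andP[rP /eqP r_neq_p].
by move=> [v [w [/(fsubsetP sub_E) vwE r_dvd]]]; split=> //; split=> //; exists v, w.
Qed.

Lemma refine_exact (k : int) :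
  (forall v, v \in V -> val_exact k a (ep p v)) ->
  (forall w, w \in W -> val_exact k b (ep p w)) ->
  (0 < k -> denominator_exact (refine G p a b V W E) G) /\
  (k < 0 -> numerator_exact (refine G p a b V W E) G).
Proof.
move=> ex_V ex_W; split=> [k_gt0 | k_lt0] r v w /=;
  rewrite in_fsetU in_fset1 => /orP[-> // | /eqP->] _ vV wW;
  rewrite eqxx ?logn_num ?logn_den //.
- by rewrite (ex_V _ vV).1 // (ex_W _ wW).1.
- by rewrite (ex_V _ vV).2 // (ex_W _ wW).2.
Qed.

Lemma refine_quality (R : realType) (mu : rat -> R) (th : R) :
  quality mu th (refine G p a b V W E) =
  mutheta mu th V W E * \prod_(r <- gP G) (r%:R : R) ^+ `|gf G r - gg G r|%N
    * (p%:R : R) ^+ `|a - b|%N.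
Proof.
rewrite /quality /= fsetUC big_fsetU1 //= eqxx -[RHS]mulrA; congr (_ * _).
by rewrite mulrC; congr (_ * _); apply: eq_big_seq => r /neq_p ->.
Qed.

End Refine.

Definition cutV (p : nat) (P : pred int) (V : {fset rat}) : {fset rat} :=
  [fset v in V | P (ep p v)]%fset.

Definition cutE (p : nat) (Pv Pw : pred int) (E : {fset (rat * rat)}) : {fset (rat * rat)} :=
  [fset e in E | Pv (ep p e.1) && Pw (ep p e.2)]%fset.

Definition mutheta_of (R : realType) (th x y e : R) : R := (e / (x * y)) `^ th * x * y.

Lemma mutheta_ofC (R : realType) (th x y e : R) :
  mutheta_of th x y e = mutheta_of th y x e.
Proof. by rewrite /mutheta_of (mulrC y x) mulrAC. Qed.

Lemma mutheta_of_expR (R : realType) (th x y e : R) : 0 < x -> 0 < y -> 0 < e ->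
  mutheta_of th x y e = expR (th * ln e - (th - 1) * (ln x + ln y)).
Proof.
move=> x_gt0 y_gt0 e_gt0; have xy_gt0 : 0 < x * y by rewrite mulr_gt0.
rewrite /mutheta_of /powR gt_eqF ?divr_gt0 // -{2}(lnK x_gt0) -{2}(lnK y_gt0) -!expRD.
by rewrite ln_div ?lnM ?posrE //; congr expR; ring.
Qed.

Lemma sum_seq_gt0 (R : numDomainType) (T : eqType) (s : seq T) (F : T -> R) x :
  (forall i, i \in s -> 0 <= F i) -> x \in s -> 0 < F x -> 0 < \sum_(i <- s) F i.
Proof.
move=> F_ge0 xs Fx_gt0; rewrite (big_rem x) //=; apply: (lt_le_trans Fx_gt0).
by rewrite lerDl big_seq sumr_ge0 // => i /mem_rem /F_ge0.
Qed.

Section Weights.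
Variables (R : realType) (mu : rat -> R).
Hypothesis mu_gt0 : forall x : rat, 0 < x -> 0 < mu x.

Lemma msum_ge0 (V : {fset rat}) : (forall v, v \in V -> 0 < v) -> 0 <= msum mu V.
Proof. by move=> V_gt0; rewrite /msum big_seq sumr_ge0 // => v /V_gt0 /mu_gt0 /ltW. Qed.

Lemma msum_gt0 (V : {fset rat}) v : (forall v, v \in V -> 0 < v) -> v \in V ->
  0 < msum mu V.
Proof.
move=> V_gt0 vV; apply: (sum_seq_gt0 _ vV); last exact/mu_gt0/V_gt0.
by move=> u /V_gt0 /mu_gt0 /ltW.
Qed.

Lemma medge_ge0 (E : {fset (rat * rat)}) :
  (forall e, e \in E -> 0 < e.1 /\ 0 < e.2) -> 0 <= medge mu E.
Proof.
move=> E_gt0; rewrite /medge big_seq sumr_ge0 // => e /E_gt0 [e1_gt0 e2_gt0].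
by rewrite mulr_ge0 // ltW // mu_gt0.
Qed.

Lemma medge_gt0 (E : {fset (rat * rat)}) e :
  (forall e, e \in E -> 0 < e.1 /\ 0 < e.2) -> e \in E -> 0 < medge mu E.
Proof.
move=> E_gt0 eE; apply: (sum_seq_gt0 _ eE) => [f /E_gt0 [? ?]|].
  by rewrite mulr_ge0 // ltW // mu_gt0.
by have [? ?] := E_gt0 _ eE; rewrite mulr_gt0 // mu_gt0.
Qed.

Lemma mutheta_sums (th : R) V W E :
  mutheta mu th V W E = mutheta_of th (msum mu V) (msum mu W) (medge mu E).
Proof.
rewrite /mutheta /mutheta_of /density; case: eqP => // ->.
by rewrite /medge big_seq_fset0 mul0r.
Qed.

Lemma mutheta0 (th : R) V W : th != 0 -> mutheta mu th V W fset0 = 0.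
Proof. by move=> th_neq0; rewrite /mutheta /density eqxx powR0 // !mul0r. Qed.

Lemma mutheta_gt0 (th : R) (G : gdata) : is_gcd_graph G -> gE G != fset0 ->
  0 < mutheta mu th (gV G) (gW G) (gE G).
Proof.
move=> [[V_gt0 W_gt0] G_ends _ _ _] /fset0Pn[e eE]; have [e1V e2W] := G_ends _ eE.
have E_gt0 f : f \in gE G -> 0 < f.1 /\ 0 < f.2 by move=> /G_ends[/V_gt0 ? /W_gt0 ?].
by rewrite mutheta_sums mutheta_of_expR ?expR_gt0 //;
  [apply: msum_gt0 e1V | apply: msum_gt0 e2W | apply: medge_gt0 eE].
Qed.

Lemma msum_cutV_disjoint (p : nat) (P Q : pred int) (V : {fset rat}) :
  (forall x, P x -> ~~ Q x) -> (forall v, v \in V -> 0 < v) ->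
  msum mu (cutV p P V) + msum mu (cutV p Q V) <= msum mu V.
Proof.
move=> PQ V_gt0; rewrite /msum -!big_fset_condE.
rewrite (big_mkcond (fun v => P (ep p v))) (big_mkcond (fun v => Q (ep p v))) -big_split /=.
rewrite big_seq [leRHS]big_seq ler_sum // => v /V_gt0 /mu_gt0 /ltW mu_ge0.
have /implyP := PQ (ep p v).
by case: (P (ep p v)); case: (Q (ep p v)); rewrite /= ?addr0 ?add0r.
Qed.

Lemma medge_cutE_partition (p : nat) (Pin Pout : pred int) (E : {fset (rat * rat)}) :
  (forall x, Pin x -> ~~ Pout x) ->
  (forall v w, (v, w) \in E -> [|| Pin (ep p v) && Pin (ep p w),
                                  Pout (ep p v) && Pin (ep p w) |
                                  Pin (ep p v) && Pout (ep p w)]) ->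
  medge mu E = medge mu (cutE p Pin Pin E) + medge mu (cutE p Pout Pin E)
               + medge mu (cutE p Pin Pout E).
Proof.
move=> disj cover; rewrite /medge -!big_fset_condE.
rewrite [X in _ = X + _ + _]big_mkcond [X in _ = _ + X + _]big_mkcond.
rewrite [X in _ = _ + X]big_mkcond -!big_split /= big_seq [RHS]big_seq.
apply: eq_bigr => -[v w] /cover /=.
have /implyP := disj (ep p v); have /implyP := disj (ep p w).
by case: (Pin (ep p v)); case: (Pout (ep p v)); case: (Pin (ep p w)); case: (Pout (ep p w));
  rewrite /= ?addr0 ?add0r.
Qed.

Lemma cutE_msum_gt0 (p : nat) (Pv Pw : pred int) V W E :
  (forall v, v \in V -> 0 < v) -> (forall w, w \in W -> 0 < w) -> edges_within V W E ->
  0 < medge mu (cutE p Pv Pw E) ->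
  0 < msum mu (cutV p Pv V) /\ 0 < msum mu (cutV p Pw W).
Proof.
move=> V_gt0 W_gt0 E_ends; have [-> | /fset0Pn[e]] := eqVneq (cutE p Pv Pw E) fset0.
  by rewrite /medge big_seq_fset0 ltxx.
rewrite !inE /= => /andP[/E_ends[e1V e2W] /andP[Pv1 Pw2]] _.
split; [apply: (msum_gt0 (v := e.1)) | apply: (msum_gt0 (v := e.2))];
  by [move=> ?; rewrite !inE => /andP[/V_gt0] | move=> ?; rewrite !inE => /andP[/W_gt0]
     | rewrite !inE e1V | rewrite !inE e2W].
Qed.

End Weights.

Lemma exists_argmax_seq (d : Order.disp_t) (O : orderType d) (T : eqType) (s : seq T)
    (f : T -> O) x :
  x \in s -> exists2 y, y \in s & forall z, z \in s -> (f z <= f y)%O.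
Proof.
elim: s x => [//|a [|b s] IH] x _.
  by exists a; rewrite ?mem_head // => z; rewrite inE => /eqP->.
have [y ys y_max] := IH b (mem_head _ _).
have [fa_le|fy_lt] := leP (f a) (f y).
  by exists y => [|z]; rewrite inE ?ys ?orbT // => /orP[/eqP-> | /y_max].
exists a => [|z]; rewrite ?mem_head // inE => /orP[/eqP-> // | /y_max fz_le].
exact: le_trans fz_le (ltW fy_lt).
Qed.

(** Among the finitely many subgraphs of [(V0, W0, E0)], one maximising [mutheta] is
    maximal, since its subgraphs are subgraphs of [(V0, W0, E0)] too. *)
Lemma exists_maximal_subgraph (R : realType) (mu : rat -> R) (th : R)
    (V0 W0 : {fset rat}) (E0 : {fset (rat * rat)}) : edges_within V0 W0 E0 ->
  exists V W E, [/\ [/\ fsubset V V0, fsubset W W0 & fsubset E E0], edges_within V W E,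
    mutheta mu th V0 W0 E0 <= mutheta mu th V W E &
    forall V' W' E', fsubset V' V -> fsubset W' W ->
      (forall e, e \in E' -> [/\ e \in E, e.1 \in V' & e.2 \in W']) ->
      mutheta mu th V' W' E' <= mutheta mu th V W E].
Proof.
move=> within0.
pose within (t : {fset rat} * {fset rat} * {fset (rat * rat)}) :=
  all (fun e => (e.1 \in t.1.1) && (e.2 \in t.1.2)) t.2.
pose subgraphs := [seq t <- [seq (VW, E) | VW <- [seq (V, W) | V <- enum_fset (fpowerset V0),
                                                               W <- enum_fset (fpowerset W0)],
                                           E <- enum_fset (fpowerset E0)] | within t].
have subgraphsP t : t \in subgraphs <->
    [/\ fsubset t.1.1 V0, fsubset t.1.2 W0, fsubset t.2 E0 & edges_within t.1.1 t.1.2 t.2].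
  rewrite mem_filter; split.
    case/andP=> /allP ends /allpairsP[[VW E] [/= VW_in E_in t_eq]]; subst t.
    case/allpairsP: VW_in => -[V W] [/= V_in W_in VW_eq]; subst VW.
    rewrite !fpowersetE in V_in W_in E_in; split=> // e /ends.
    by case/andP.
  case: t => -[V W] E [/= VV0 WW0 EE0 within_VWE]; apply/andP; split.
    by apply/allP => e /within_VWE [-> ->].
  by apply: allpairs_f; rewrite ?fpowersetE //; apply: allpairs_f; rewrite fpowersetE.
have /(exists_argmax_seq (fun t => mutheta mu th t.1.1 t.1.2 t.2)) :
    ((V0, W0), E0) \in subgraphs.
  by apply/subgraphsP; split=> //; apply: fsubset_refl.
move=> [[[V W] E] /subgraphsP[/= VV0 WW0 EE0 within_VWE] t_max]; exists V, W, E; split=> //.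
  by apply: (t_max ((V0, W0), E0)); apply/subgraphsP; split=> //; apply: fsubset_refl.
move=> V' W' E' V'V W'W E'_sub; apply: (t_max ((V', W'), E')); apply/subgraphsP.
have E'E : fsubset E' E by apply/fsubsetP => e /E'_sub[].
split; [exact: fsubset_trans V'V VV0 | exact: fsubset_trans W'W WW0
       | exact: fsubset_trans E'E EE0 | by move=> e /E'_sub[]].
Qed.

Lemma maximal_refinement (R : realType) (mu : rat -> R) (th : R) (G : gdata) (p : nat)
    (a b : int) (Pv Pw : pred int) :
  th != 0 -> is_gcd_graph G -> prime p -> p \notin gP G ->
  (forall x, Pv x -> val_dvd a x) -> (forall x, Pw x -> val_dvd b x) ->
  (forall v w, (v, w) \in gE G -> Pv (ep p v) -> Pw (ep p w) ->
     val_gcd a b (ep p v) (ep p w)) ->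
  0 < mutheta mu th (cutV p Pv (gV G)) (cutV p Pw (gW G)) (cutE p Pv Pw (gE G)) ->
  exists V W E,
    [/\ is_gcd_graph (refine G p a b V W E), gcd_subgraph (refine G p a b V W E) G,
        E != fset0, maximal mu th (refine G p a b V W E) &
        [/\ forall r, inR (refine G p a b V W E) r -> inR G r /\ r <> p,
            forall v, v \in V -> Pv (ep p v), forall w, w \in W -> Pw (ep p w) &
            mutheta mu th (cutV p Pv (gV G)) (cutV p Pw (gW G)) (cutE p Pv Pw (gE G))
              <= mutheta mu th V W E]].
Proof.
move=> th_neq0 G_gcd p_prime p_notin dvd_v dvd_w gcd_vw cut_gt0.
have [_ G_ends _ _ _] := G_gcd.
have cut_within : edges_within (cutV p Pv (gV G)) (cutV p Pw (gW G)) (cutE p Pv Pw (gE G)).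
  move=> e; rewrite !inE /= => /andP[/G_ends[-> ->] /andP[-> ->]]; by split.
have [V [W [E [[VV0 WW0 EE0] within cut_le max_VWE]]]] := exists_maximal_subgraph mu th cut_within.
have Pv_V v : v \in V -> Pv (ep p v) by move/(fsubsetP VV0); rewrite !inE => /andP[].
have Pw_W w : w \in W -> Pw (ep p w) by move/(fsubsetP WW0); rewrite !inE => /andP[].
have sub_V : fsubset V (gV G).
  by apply: fsubset_trans VV0 _; apply/fsubsetP => v; rewrite !inE => /andP[].
have sub_W : fsubset W (gW G).
  by apply: fsubset_trans WW0 _; apply/fsubsetP => w; rewrite !inE => /andP[].
have sub_E : fsubset E (gE G).
  by apply: fsubset_trans EE0 _; apply/fsubsetP => e; rewrite !inE => /andP[].
exists V, W, E; split.
- apply: refine_gcd_graph => // [v /Pv_V /dvd_v | w /Pw_W /dvd_w | v w vwE] //.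
  have [/Pv_V ? /Pw_W ?] := within _ vwE.
  by apply: gcd_vw => //; apply: (fsubsetP sub_E).
- exact: refine_subgraph.
- by apply: contraTneq cut_gt0 => E0; move: cut_le; rewrite E0 mutheta0 // => /le_gtF ->.
- exact: max_VWE.
- by split=> // r; apply: refine_inR.
Qed.

Definition loss_factor (R : realType) (tau : R) (p : nat) : R :=
  1 - 1 / ((p%:R : R) `^ (1 + tau / 4)).

Lemma loss_factor_gt0 (R : realType) (tau : R) (p : nat) :
  0 < tau -> (1 < p)%N -> 0 < loss_factor tau p.
Proof.
move=> tau_gt0 p_gt1; have r_gt0 : 0 < 1 + tau / 4 by rewrite addr_gt0 ?divr_gt0.
have : 1 `^ (1 + tau / 4) < (p%:R : R) `^ (1 + tau / 4).
  by apply: gt0_ltr_powR; rewrite ?nnegrE ?ler0n ?ltr1n.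
rewrite powR1 /loss_factor subr_gt0 div1r => p_pow_gt1.
by rewrite invf_lt1 // (lt_trans ltr01).
Qed.

Definition good_refinement (R : realType) (tau : R) (mu : rat -> R) (G : gdata) (p : nat)
    (k : int) (G' : gdata) : Prop :=
  [/\ is_gcd_graph G', gcd_subgraph G' G, gE G' != fset0, maximal mu (2 + tau) G' &
      [/\ gP G' = (gP G `|` [fset p])%fset,
          forall r, inR G' r -> inR G r /\ r <> p,
          gf G' p \in [:: k - 1; k; k + 1] /\ gg G' p \in [:: k - 1; k; k + 1],
          (0 < k -> denominator_exact G' G) /\ (k < 0 -> numerator_exact G' G) &
          quality mu (2 + tau) G * (1 - (if (gf G' p == k) && (gg G' p == k)
                                        then 1 else 0) / (p%:R : R)) ^+ 2
            * loss_factor tau p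
          <= quality mu (2 + tau) G']].

Lemma good_refinement_of_cut (R : realType) (tau : R) (mu : rat -> R) (G : gdata) (p : nat)
    (k a b : int) (Pv Pw : pred int) :
  0 < tau -> is_gcd_graph G -> prime p -> p \notin gP G ->
  a \in [:: k - 1; k; k + 1] -> b \in [:: k - 1; k; k + 1] ->
  (forall x, Pv x -> val_dvd a x /\ val_exact k a x) ->
  (forall x, Pw x -> val_dvd b x /\ val_exact k b x) ->
  (forall v w, (v, w) \in gE G -> Pv (ep p v) -> Pw (ep p w) ->
     val_gcd a b (ep p v) (ep p w)) ->
  0 < mutheta mu (2 + tau) (gV G) (gW G) (gE G) ->
  mutheta mu (2 + tau) (gV G) (gW G) (gE G)
    * (1 - (if (a == k) && (b == k) then 1 else 0) / (p%:R : R)) ^+ 2 * loss_factor tau p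
    <= mutheta mu (2 + tau) (cutV p Pv (gV G)) (cutV p Pw (gW G)) (cutE p Pv Pw (gE G))
       * (p%:R : R) ^+ `|a - b|%N ->
  exists G', good_refinement tau mu G p k G'.
Proof.
move=> tau_gt0 G_gcd p_prime p_notin a_near b_near Pv_ok Pw_ok gcd_vw G_gt0 G_le.
have p_gt1 : (1 : R) < p%:R by rewrite ltr1n prime_gt1.
set c := (if _ then _ else _) in G_le.
have c_gt0 : 0 < (1 - c / p%:R) ^+ 2.
  rewrite exprn_gt0 // subr_gt0 /c; case: ifP => _; rewrite ?mul0r // mul1r invf_lt1 //.
  exact: lt_trans p_gt1.
have cut_gt0 : 0 < mutheta mu (2 + tau) (cutV p Pv (gV G)) (cutV p Pw (gW G))
                                        (cutE p Pv Pw (gE G)).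
  rewrite -(pmulr_lgt0 _ (exprn_gt0 `|a - b|%N (lt_trans ltr01 p_gt1))).
  apply: lt_le_trans G_le; apply: mulr_gt0; first exact: mulr_gt0.
  by apply: loss_factor_gt0; rewrite ?prime_gt1.
have th_neq0 : 2 + tau != 0 by rewrite gt_eqF // addr_gt0.
have [V [W [E [gcd_G' sub_G' E_neq0 max_G' [R_G' Pv_V Pw_W cut_le]]]]] :=
  maximal_refinement th_neq0 G_gcd p_prime p_notin (fun x Pvx => (Pv_ok x Pvx).1)
    (fun x Pwx => (Pw_ok x Pwx).1) gcd_vw cut_gt0.
exists (refine G p a b V W E); split=> //; split=> //=; rewrite ?eqxx //.
  by apply: refine_exact => // [v /Pv_V /Pv_ok[] | w /Pw_W /Pw_ok[]].
rewrite refine_quality // -/c.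
have prod_ge0 : 0 <= \prod_(r <- gP G) (r%:R : R) ^+ `|gf G r - gg G r|%N.
  by rewrite prodr_ge0 // => r _; rewrite exprn_ge0.
have pp_ge0 : (0 : R) <= p%:R ^+ `|a - b|%N by rewrite exprn_ge0.
have := ler_wpM2r prod_ge0 (le_trans G_le (ler_wpM2r pp_ge0 cut_le)).
by rewrite /quality; lra.
Qed.

Lemma ln_subr1_le (R : realType) (x : R) : x < 1 -> ln (1 - x) <= - x.
Proof. by move=> x_lt1; apply: le_ln1Dx; rewrite ltrN2. Qed.

Lemma ln_subr1_ge (R : realType) (t : R) : 0 <= t < 1 -> - (t / (1 - t)) <= ln (1 - t).
Proof.
move=> /andP[t_ge0 t_lt1]; have s_gt0 : 0 < 1 - t by rewrite subr_gt0.
have inv_s : (1 - t)^-1 = 1 + t / (1 - t).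
  by rewrite -[X in _ = X + _](divff (lt0r_neq0 s_gt0)) -mulrDl subrK mul1r.
rewrite -[1 - t]invrK lnV ?posrE ?invr_gt0 // lerN2 [X in ln X]inv_s invrK.
apply: le_ln1Dx.
by apply: lt_le_trans (divr_ge0 t_ge0 (ltW s_gt0)); rewrite ltrN10.
Qed.

Lemma failed_small (R : realType) (th P u X : R) : 1 < th -> 0 < P ->
  0 <= u -> 0 <= X <= 1 -> u `^ th * P <= X `^ (th - 1) -> u <= P `^ (- th^-1).
Proof.
move=> th_gt1 P_gt0 u_ge0 /andP[X_ge0 X_le1] failed; have th_gt0 : 0 < th by lra.
have : X `^ (th - 1) <= 1 `^ (th - 1) by apply: ge0_ler_powR; rewrite ?nnegrE; lra.
rewrite powR1 => X_pow_le1.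
have u_pow_le : u `^ th <= P^-1.
  by rewrite -div1r ler_pdivlMr //; apply: le_trans failed X_pow_le1.
have -> : u = (u `^ th) `^ th^-1 by rewrite -powRrM mulfV ?powRr1 // gt_eqF.
rewrite -mulN1r powRrM powR_inv1 ?(ltW P_gt0) //.
by apply: ge0_ler_powR; rewrite // ?nnegrE ?invr_ge0 ?powR_ge0 ?(ltW th_gt0) ?(ltW P_gt0).
Qed.

(** Young's inequality with the conjugate exponents [th] and [th / (th - 1)], applied to
    the product [(m P^(-1/th)) (u P^(1/th))]. *)
Lemma failed_young (R : realType) (th P m u X : R) : 1 < th -> 0 < P ->
  0 <= m -> 0 <= u -> 0 <= X -> u `^ th * P <= X `^ (th - 1) ->
  th * m * u <= m `^ th / P + (th - 1) * X.
Proof.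
move=> th_gt1 P_gt0 m_ge0 u_ge0 X_ge0 failed.
have th_gt0 : 0 < th by lra.
have th1_gt0 : 0 < th - 1 by lra.
set a := m * P `^ (- th^-1); set b := u * P `^ th^-1.
have ab : a * b = m * u by rewrite /a /b mulrACA powRN mulVf ?mulr1 ?gt_eqF ?powR_gt0.
have a_pow : a `^ th = m `^ th / P.
  rewrite powRM ?powR_ge0 // -powRrM mulNr mulVf ?gt_eqF //.
  by rewrite powR_inv1 ?(ltW P_gt0).
have b_pow : b `^ (th / (th - 1)) <= X.
  rewrite powRrM powRM ?powR_ge0 // -powRrM mulVf ?gt_eqF // powRr1 ?(ltW P_gt0) //.
  have -> : X = (X `^ (th - 1)) `^ (th - 1)^-1.
    by rewrite -powRrM mulfV ?powRr1 // gt_eqF.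
  apply: ge0_ler_powR; rewrite // ?nnegrE ?invr_ge0 ?powR_ge0 ?(ltW th1_gt0) //.
  by rewrite mulr_ge0 ?powR_ge0 ?(ltW P_gt0).
have q_gt0 : 0 < th / (th - 1) by rewrite divr_gt0.
have conj : th^-1 + (th / (th - 1))^-1 = 1.
  by rewrite invf_div; field; rewrite lt0r_neq0.
have young := conjugate_powR (mulr_ge0 m_ge0 (powR_ge0 P (- th^-1)))
  (mulr_ge0 u_ge0 (powR_ge0 P th^-1)) th_gt0 q_gt0 conj.
rewrite -/a -/b ab a_pow in young.
have -> : th * m * u = th * (m * u) by rewrite mulrA.
apply: le_trans (ler_wpM2l (ltW th_gt0) young) _.
have -> : th * (m `^ th / P / th + b `^ (th / (th - 1)) / (th / (th - 1))) =
          m `^ th / P + (th - 1) * b `^ (th / (th - 1)).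
  by field; rewrite ?lt0r_neq0.
by rewrite lerD2l ler_wpM2l ?(ltW th1_gt0).
Qed.

Lemma root_le_loss (R : realType) (tau P : R) : 0 < tau -> tau < 1 / 100 ->
  80 ^+ 4 <= P -> 80 * P `^ (- (2 + tau)^-1) <= P `^ (- (tau / 4)).
Proof.
move=> tau_gt0 tau_lt P_large.
have P_gt0 : 0 < P by apply: lt_le_trans P_large; rewrite exprn_gt0.
have lnP : ln 80 * 4 <= ln P.
  by rewrite mulr_natr -lnXn ?ler_ln ?posrE ?exprn_gt0.
have inv_th : (1 + tau) / 4 <= (2 + tau)^-1.
  by rewrite -[(2 + tau)^-1]div1r ler_pdivlMr ?addr_gt0 //; nra.
have ln80 : 0 <= ln (80 : R) by apply: ln_ge0; rewrite ler1n.
have -> : (80 : R) = expR (ln 80) by rewrite lnK // posrE.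
have := ler_wpM2r (le_trans (mulr_ge0 ln80 (ler0n _ 4)) lnP) inv_th.
by rewrite /powR gt_eqF // -expRD ler_expR; lra.
Qed.

Lemma inv_subr_powR_le (R : realType) (th t : R) : 1 <= th <= 3 -> 0 <= t <= 1 / 40 ->
  (1 - t)^-1 `^ th <= 1 + 20 * t.
Proof.
move=> /andP[th_ge1 th_le3] /andP[t_ge0 t_small].
have s_gt0 : 0 < 1 - t by lra.
have m_ge1 : 1 <= (1 - t)^-1 by rewrite invf_ge1 //; lra.
apply: le_trans (ler_powR m_ge1 th_le3) _.
rewrite powR_mulrn ?invr_ge0 ?(ltW s_gt0) // exprVn.
rewrite -div1r ler_pdivrMr ?exprn_gt0 // !exprS expr0; nra.
Qed.

Lemma failed_pair_small (R : realType) (tau P u v X Y : R) :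
  0 < tau -> tau < 1 / 100 -> 80 ^+ 4 <= P ->
  0 <= u -> 0 <= v -> 0 <= X <= 1 -> 0 <= Y <= 1 ->
  u `^ (2 + tau) * P <= X `^ (2 + tau - 1) -> v `^ (2 + tau) * P <= Y `^ (2 + tau - 1) ->
  u + v <= P `^ (- (tau / 4)) / 40.
Proof.
move=> tau_gt0 tau_lt P_large u_ge0 v_ge0 X01 Y01 failed_u failed_v.
have P_gt0 : 0 < P by apply: lt_le_trans P_large; rewrite exprn_gt0.
have th_gt1 : 1 < 2 + tau by lra.
have := failed_small th_gt1 P_gt0 u_ge0 X01 failed_u.
have := failed_small th_gt1 P_gt0 v_ge0 Y01 failed_v.
have := root_le_loss tau_gt0 tau_lt P_large; lra.
Qed.

Lemma ln_ratio_ge_loss (R : realType) (tau P u v X Y xa ya : R) :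
  0 < tau -> tau < 1 / 100 -> 80 ^+ 4 <= P ->
  0 <= u -> 0 <= v -> 0 <= X <= 1 -> 0 <= Y <= 1 ->
  u `^ (2 + tau) * P <= X `^ (2 + tau - 1) -> v `^ (2 + tau) * P <= Y `^ (2 + tau - 1) ->
  0 < xa <= 1 - X -> 0 < ya <= 1 - Y ->
  2 * ln (1 - P^-1) + ln (1 - 1 / P `^ (1 + tau / 4))
    <= (2 + tau) * ln (1 - (u + v)) - (2 + tau - 1) * (ln xa + ln ya).
Proof.
move=> tau_gt0 tau_lt P_large u_ge0 v_ge0 X01 Y01 failed_u failed_v.
move=> /andP[xa_gt0 xa_le] /andP[ya_gt0 ya_le].
have P_gt0 : 0 < P by apply: lt_le_trans P_large; rewrite exprn_gt0.
have P_gt1 : 1 < P by apply: lt_le_trans P_large; rewrite exprn_egt1 // ltr1n.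
have th_gt1 : 1 < 2 + tau by lra.
set w := P `^ (- (tau / 4)); set t := u + v.
have w_le1 : w <= 1.
  rewrite /w /powR gt_eqF // expR_le1 mulNr oppr_le0 mulr_ge0 ?ln_ge0 ?ltW //; lra.
have t_small : t <= w / 40 by apply: failed_pair_small failed_u failed_v.
set m := (1 - t)^-1.
have m_pow : m `^ (2 + tau) <= 1 + w / 2.
  apply: le_trans (inv_subr_powR_le _ _) _; rewrite ?addr_ge0 //; lra.
have m_ge0 : 0 <= m by rewrite invr_ge0; lra.
have young_u := failed_young th_gt1 P_gt0 m_ge0 u_ge0 (proj1 (andP X01)) failed_u.
have young_v := failed_young th_gt1 P_gt0 m_ge0 v_ge0 (proj1 (andP Y01)) failed_v.
have mP : m `^ (2 + tau) / P <= (1 + w / 2) / P by rewrite ler_pM2r ?invr_gt0.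
have t_ge0 : 0 <= t by rewrite addr_ge0.
have ln_t : - (t * m) <= ln (1 - t) by apply: ln_subr1_ge; apply/andP; split; lra.
have ln_xa : ln xa <= - X.
  by apply: le_trans (ln_subr1_le _); [rewrite ler_ln ?posrE | ]; lra.
have ln_ya : ln ya <= - Y.
  by apply: le_trans (ln_subr1_le _); [rewrite ler_ln ?posrE | ]; lra.
have q_lt1 : P^-1 < 1 by rewrite invf_lt1.
have ln_q : ln (1 - P^-1) <= - P^-1 by apply: ln_subr1_le.
have loss_eq : 1 / P `^ (1 + tau / 4) = P^-1 * w.
  by rewrite /w powRN powRD ?powRr1 ?(gt_eqF P_gt0) ?implybT ?(ltW P_gt0) // div1r invfM.
have ln_qw : ln (1 - P^-1 * w) <= - (P^-1 * w).
  apply: ln_subr1_le; apply: le_lt_trans q_lt1; rewrite ger_pMr ?invr_gt0 //.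
have th_ge0 : 0 <= 2 + tau by lra.
have th1_ge0 : 0 <= 2 + tau - 1 by lra.
have := ler_wpM2l th_ge0 ln_t.
have := ler_wpM2l th1_ge0 (lerD ln_xa ln_ya).
have tm : (2 + tau) * (t * m) = (2 + tau) * m * u + (2 + tau) * m * v by rewrite /t; ring.
rewrite loss_eq; lra.
Qed.

Lemma failed_option_ratio (R : realType) (th P x y e x1 y1 e1 : R) :
  1 < th -> 0 < P -> 0 < x -> 0 < y -> 0 < e -> 0 <= e1 -> y1 <= y ->
  (0 < e1 -> 0 < x1 /\ 0 < y1) ->
  mutheta_of th x1 y1 e1 * P < mutheta_of th x y e ->
  (e1 / e) `^ th * P <= (x1 / x) `^ (th - 1).
Proof.
move=> th_gt1 P_gt0 x_gt0 y_gt0 e_gt0 e1_ge0 y1_le ends_gt0.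
have [-> _ | e1_neq0] := eqVneq e1 0.
  by rewrite mul0r powR0 ?mul0r ?powR_ge0 // gt_eqF //; lra.
have e1_gt0 : 0 < e1 by rewrite lt_def e1_neq0.
have [x1_gt0 y1_gt0] := ends_gt0 e1_gt0.
rewrite !mutheta_of_expR // -[P in _ * P]lnK ?posrE // -expRD ltr_expR => lt_ln.
have : (th - 1) * ln y1 <= (th - 1) * ln y by rewrite ler_wpM2l ?ler_ln ?posrE //; lra.
rewrite -(lnK P_gt0) /powR !gt_eqF ?divr_gt0 // -expRD ler_expR !ln_div ?posrE //.
lra.
Qed.

Lemma third_option (R : realType) (tau : R) (p : nat) (E EA E1 E2 V VA V1 W WA W2 : R) :
  0 < tau -> tau < 1 / 100 -> 80 ^+ 4 <= (p%:R : R) ->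
  0 < E -> E = EA + E1 + E2 -> 0 <= E1 -> 0 <= E2 ->
  0 < V -> VA + V1 <= V -> 0 <= VA -> 0 <= V1 ->
  0 < W -> WA + W2 <= W -> 0 <= WA -> 0 <= W2 ->
  (0 < EA -> 0 < VA /\ 0 < WA) ->
  (E1 / E) `^ (2 + tau) * p%:R <= (V1 / V) `^ (2 + tau - 1) ->
  (E2 / E) `^ (2 + tau) * p%:R <= (W2 / W) `^ (2 + tau - 1) ->
  mutheta_of (2 + tau) V W E * (1 - 1 / p%:R) ^+ 2 * loss_factor tau p
    <= mutheta_of (2 + tau) VA WA EA.
Proof.
move=> tau_gt0 tau_lt p_large E_gt0 E_split E1_ge0 E2_ge0 V_gt0 V_split VA_ge0 V1_ge0.
move=> W_gt0 W_split WA_ge0 W2_ge0 A_ends failed_u failed_v.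
have K_gt0 : 0 < loss_factor tau p.
  apply: loss_factor_gt0 => //; rewrite -(ltr_nat R).
  by apply: lt_le_trans p_large; rewrite exprn_egt1 // ltr1n.
rewrite /loss_factor in K_gt0 *; set P := (p%:R : R) in p_large K_gt0 failed_u failed_v *.
have P_gt1 : 1 < P by apply: lt_le_trans p_large; rewrite exprn_egt1 // ltr1n.
have u_ge0 : 0 <= E1 / E by apply: divr_ge0 => //; apply: ltW.
have v_ge0 : 0 <= E2 / E by apply: divr_ge0 => //; apply: ltW.
have X01 : 0 <= V1 / V <= 1.
  by apply/andP; split; [apply: divr_ge0 | rewrite ler_pdivrMr // mul1r]; lra.
have Y01 : 0 <= W2 / W <= 1.
  by apply/andP; split; [apply: divr_ge0 | rewrite ler_pdivrMr // mul1r]; lra.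
have w_le1 : P `^ (- (tau / 4)) <= 1.
  by rewrite -[X in _ <= X](powRr0 P); apply: ler_powR; [apply: ltW | lra].
have := failed_pair_small tau_gt0 tau_lt p_large u_ge0 v_ge0 X01 Y01 failed_u failed_v.
have EA_eq : EA / E = 1 - (E1 / E + E2 / E).
  by rewrite -mulrDl -[1](divff (lt0r_neq0 E_gt0)) -mulrBl E_split; congr (_ / _); ring.
move=> small; have EA_gt0 : 0 < EA.
  have : 0 < EA / E by rewrite EA_eq; lra.
  by rewrite pmulr_lgt0 ?invr_gt0.
have [VA_gt0 WA_gt0] := A_ends EA_gt0.
have frac_le (A B C : R) : 0 < C -> A + B <= C -> A / C <= 1 - B / C.
  by move=> C_gt0 ABC; rewrite ler_pdivrMr // mulrBl mul1r divfK ?gt_eqF //; lra.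
have xa01 : 0 < VA / V <= 1 - V1 / V by rewrite divr_gt0 //= frac_le.
have ya01 : 0 < WA / W <= 1 - W2 / W by rewrite divr_gt0 //= frac_le.
have := ln_ratio_ge_loss tau_gt0 tau_lt p_large u_ge0 v_ge0 X01 Y01 failed_u failed_v xa01 ya01.
rewrite -EA_eq !ln_div ?posrE // => core.
have q_gt0 : 0 < 1 - 1 / P by rewrite subr_gt0 div1r invf_lt1 // (lt_trans ltr01).
rewrite !mutheta_of_expR // -[1 - 1 / P](lnK q_gt0) -[1 - 1 / P `^ _](lnK K_gt0).
rewrite -expRM_natl -!expRD ler_expR !div1r; rewrite div1r in core; lra.
Qed.

Lemma three_options (R : realType) (tau : R) (p : nat) (E EA E1 E2 V VA V1 W WA W2 : R) :
  0 < tau -> tau < 1 / 100 -> 80 ^+ 4 <= (p%:R : R) ->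
  0 < E -> E = EA + E1 + E2 -> 0 <= E1 -> 0 <= E2 ->
  0 < V -> VA + V1 <= V -> 0 <= VA -> 0 <= V1 ->
  0 < W -> WA + W2 <= W -> 0 <= WA -> 0 <= W2 ->
  (0 < EA -> 0 < VA /\ 0 < WA) -> (0 < E1 -> 0 < V1 /\ 0 < WA) ->
  (0 < E2 -> 0 < VA /\ 0 < W2) ->
  [\/ mutheta_of (2 + tau) V W E * loss_factor tau p
        <= mutheta_of (2 + tau) V1 WA E1 * p%:R,
      mutheta_of (2 + tau) V W E * loss_factor tau p
        <= mutheta_of (2 + tau) VA W2 E2 * p%:R |
      mutheta_of (2 + tau) V W E * (1 - 1 / p%:R) ^+ 2 * loss_factor tau p
        <= mutheta_of (2 + tau) VA WA EA].
Proof.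
move=> tau_gt0 tau_lt p_large E_gt0 E_split E1_ge0 E2_ge0 V_gt0 V_split VA_ge0 V1_ge0.
move=> W_gt0 W_split WA_ge0 W2_ge0 A_ends B1_ends B2_ends.
set P := (p%:R : R) in p_large *; set m0 := mutheta_of (2 + tau) V W E.
have P_gt0 : 0 < P by apply: lt_le_trans p_large; rewrite exprn_gt0.
have th_gt1 : 1 < 2 + tau by lra.
have K_le1 : loss_factor tau p <= 1 by rewrite gerBl divr_ge0 ?powR_ge0.
have m0_gt0 : 0 < m0 by rewrite /m0 mutheta_of_expR ?expR_gt0.
have [B1|B1_failed] := lerP (m0 * loss_factor tau p) (mutheta_of (2 + tau) V1 WA E1 * P).
  exact: Or31.
have [B2|B2_failed] := lerP (m0 * loss_factor tau p) (mutheta_of (2 + tau) VA W2 E2 * P).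
  exact: Or32.
have below_m0 m : m * P < m0 * loss_factor tau p -> m * P < m0.
  by move=> lt_m; apply: lt_le_trans lt_m _; rewrite ger_pMr.
apply/Or33/(third_option (E1 := E1) (E2 := E2) (V1 := V1) (W2 := W2)) => //.
- apply: (failed_option_ratio th_gt1 P_gt0 V_gt0 W_gt0 E_gt0 E1_ge0 _ B1_ends
    (below_m0 _ B1_failed)); lra.
- move: (below_m0 _ B2_failed); rewrite /m0 mutheta_ofC [mutheta_of _ V _ _]mutheta_ofC.
  apply: (failed_option_ratio th_gt1 P_gt0 W_gt0 V_gt0 E_gt0 E2_ge0); first lra.
  by move=> /B2_ends[? ?].
Qed.

Lemma three_cut_options (R : realType) (tau : R) (mu : rat -> R) (G : gdata) (p : nat)
    (Pin Pout : pred int) :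
  0 < tau -> tau < 1 / 100 -> 80 ^+ 4 <= (p%:R : R) ->
  (forall x : rat, 0 < x -> 0 < mu x) -> is_gcd_graph G -> gE G != fset0 ->
  (forall x, Pin x -> ~~ Pout x) ->
  (forall v w, (v, w) \in gE G -> [|| Pin (ep p v) && Pin (ep p w),
                                    Pout (ep p v) && Pin (ep p w) |
                                    Pin (ep p v) && Pout (ep p w)]) ->
  let mG := mutheta mu (2 + tau) (gV G) (gW G) (gE G) in
  [\/ mG * loss_factor tau p <= mutheta mu (2 + tau) (cutV p Pout (gV G))
                                  (cutV p Pin (gW G)) (cutE p Pout Pin (gE G)) * p%:R,
      mG * loss_factor tau p <= mutheta mu (2 + tau) (cutV p Pin (gV G))
                                  (cutV p Pout (gW G)) (cutE p Pin Pout (gE G)) * p%:R |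
      mG * (1 - 1 / p%:R) ^+ 2 * loss_factor tau p
        <= mutheta mu (2 + tau) (cutV p Pin (gV G)) (cutV p Pin (gW G))
                                (cutE p Pin Pin (gE G))].
Proof.
move=> tau_gt0 tau_lt p_large mu_gt0 [[V_gt0 W_gt0] G_ends _ _ _] /fset0Pn[e0 e0E] disj cover.
have E_gt0 e : e \in gE G -> 0 < e.1 /\ 0 < e.2.
  by move=> /G_ends[/V_gt0 ? /W_gt0 ?].
have cutV_gt0 P (V : {fset rat}) : (forall v, v \in V -> 0 < v) ->
    forall v, v \in cutV p P V -> 0 < v.
  by move=> V'_gt0 v; rewrite !inE => /andP[/V'_gt0].
have cutE_gt0 Pv Pw e : e \in cutE p Pv Pw (gE G) -> 0 < e.1 /\ 0 < e.2.
  by rewrite !inE => /andP[/E_gt0].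
have [e01_V e02_W] := G_ends _ e0E.
rewrite /= !mutheta_sums; apply: three_options => //;
  try solve [ exact: medge_ge0 (cutE_gt0 _ _) | exact: msum_ge0 (cutV_gt0 _ _ _)
            | exact: cutE_msum_gt0 | exact: msum_cutV_disjoint ].
- exact: medge_gt0 E_gt0 e0E.
- exact: medge_cutE_partition.
- exact: msum_gt0 V_gt0 e01_V.
- exact: msum_gt0 W_gt0 e02_W.
Qed.

Lemma pow80_le_C6 (R : realType) (tau M : R) : 0 < tau -> tau < 1 / 100 -> 2 <= M ->
  80 ^+ 4 <= C6 tau M.
Proof.
move=> tau_gt0 tau_lt M_ge2.
have ten_ge1 : (1 : R) <= 10 by rewrite ler1n.
have C1_ge1 : 1 <= C1 tau.
  rewrite /C1 ler_pdivlMr // mul1r; apply: le_trans (exprn_ege1 4 ten_ge1); lra.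
have C2_ge1 : 1 <= C2 tau M by have := exprn_ege1 3 C1_ge1; rewrite /C2; nra.
have C4_ge : 10 ^+ 10 <= C4 tau M.
  rewrite /C4 -mulrA ler_peMr ?exprn_ge0 ?ler0n // mulr_ege1 // exprn_ege1 //; lra.
have le_10 : (80 : R) ^+ 4 <= 10 ^+ 10.
  have : (80 : R) ^+ 4 <= (10 ^+ 2) ^+ 4.
    by apply: lerXn2r; rewrite ?nnegrE ?exprn_ge0 ?expr2 //; lra.
  by move/le_trans; apply; rewrite -exprM ler_eXn2l // ltr1n.
by apply: le_trans le_10 (le_trans C4_ge _); rewrite /C6 !le_max lexx.
Qed.

Lemma exists_good_refinement (R : realType) (tau : R) (mu : rat -> R) (G : gdata) (p : nat)
    (k a : int) :
  0 < tau -> tau < 1 / 100 -> 80 ^+ 4 <= (p%:R : R) -> (forall x : rat, 0 < x -> 0 < mu x) ->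
  is_gcd_graph G -> gE G != fset0 -> prime p -> p \notin gP G ->
  (forall v w, (v, w) \in gE G -> near_pair k (ep p v) (ep p w)) ->
  a \in [:: k - 1; k + 1] -> (a - k) * k < 0 ->
  exists G', good_refinement tau mu G p k G'.
Proof.
move=> tau_gt0 tau_lt p_large mu_gt0 G_gcd E_neq0 p_prime p_notin near a_near a_toward0.
have G_gt0 := mutheta_gt0 mu_gt0 (2 + tau) G_gcd E_neq0.
have Pin_ok x : beyond k a x -> val_dvd k x /\ val_exact k k x.
  by move=> x_beyond; split; [apply: beyond_val_dvd x_beyond | apply: beyond_val_exact x_beyond].
have Pout_ok x : x == a -> val_dvd a x /\ val_exact k a x by move=> /eqP->.
have gcd_ok v w : (v, w) \in gE G -> _ :=
  fun vwE => near_pair_gcd a_near a_toward0 (near v w vwE).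
have [a_neq_k a_dist] : a != k /\ `|a - k|%N = 1%N by move: a_near; rewrite !inE; lia.
have [a_in k_in] : a \in [:: k - 1; k; k + 1] /\ k \in [:: k - 1; k; k + 1].
  by move: a_near; rewrite !inE eqxx !orbT => /orP[] ->; rewrite ?orbT.
have [B1|B2|A] := three_cut_options (Pin := beyond k a) (Pout := fun x => x == a)
  tau_gt0 tau_lt p_large mu_gt0 G_gcd E_neq0 (beyond_neq a_near a_toward0)
  (fun v w vwE => near_pair_cases a_near a_toward0 (near v w vwE)).
- apply: (good_refinement_of_cut tau_gt0 G_gcd p_prime p_notin a_in k_in Pout_ok Pin_ok _ G_gt0).
  + by move=> v w vwE /eqP va wb; have [_ + _] := gcd_ok v w vwE; apply.
  + by rewrite (negbTE a_neq_k) /= mul0r subr0 expr1n mulr1 a_dist expr1.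
- apply: (good_refinement_of_cut tau_gt0 G_gcd p_prime p_notin k_in a_in Pin_ok Pout_ok _ G_gt0).
  + by move=> v w vwE vb /eqP wa; have [_ _] := gcd_ok v w vwE; apply.
  + by rewrite (negbTE a_neq_k) andbF mul0r subr0 expr1n mulr1 -abszN opprB a_dist expr1.
- apply: (good_refinement_of_cut tau_gt0 G_gcd p_prime p_notin k_in k_in Pin_ok Pin_ok _ G_gt0).
  + by move=> v w vwE vb wb; have [+ _ _] := gcd_ok v w vwE; apply.
  + by rewrite eqxx subrr absz0 expr0 mulr1.
Qed.

Theorem lemma11p1 (R : realType) (tau M : R) (mu : rat -> R)
    (G : gdata) (p : nat) (kp : int) :
  0 < tau -> tau < 1 / 100 -> 2 <= M ->
  (forall x : rat, 0 < x -> 0 < mu x) ->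
  is_gcd_graph G -> gE G != fset0 -> maximal mu (2 + tau) G -> structured G ->
  inR G p -> C6 tau M < (p%:R : R) ->
  (forall v w, (v, w) \in gE G ->
     (ep p v, ep p w) \in [:: (kp - 1, kp); (kp, kp - 1); (kp, kp);
                             (kp, kp + 1); (kp + 1, kp)]) ->
  exists G' : gdata,
    [/\ is_gcd_graph G', gcd_subgraph G' G, gE G' != fset0,
        maximal mu (2 + tau) G' &
        [/\ gP G' = (gP G `|` [fset p])%fset,
            (forall r, inR G' r -> inR G r /\ r <> p),
            gf G' p \in [:: kp - 1; kp; kp + 1] /\ gg G' p \in [:: kp - 1; kp; kp + 1],
            ((0 < kp -> denominator_exact G' G) /\ (kp < 0 -> numerator_exact G' G)) &
            quality mu (2 + tau) G * (1 - (if (gf G' p == kp) && (gg G' p == kp)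
                                         then 1 else 0) / (p%:R : R)) ^+ 2
              * (1 - 1 / ((p%:R : R) `^ (1 + tau / 4)))
            <= quality mu (2 + tau) G']].
Proof.
move=> tau_gt0 tau_lt M_ge2 mu_gt0 G_gcd E_neq0 _ _ [p_prime p_notin [v [w [vwE p_dvd]]]].
move=> C6_lt_p near.
have [[V_gt0 W_gt0] G_ends _ _ _] := G_gcd.
have [vV wW] := G_ends _ vwE.
have [a a_near a_toward0] := near_pair_neighbour (near _ _ vwE)
  (edge_dvd_val_pos p_prime (V_gt0 _ vV) (W_gt0 _ wW) p_dvd).
have p_large := le_trans (pow80_le_C6 tau_gt0 tau_lt M_ge2) (ltW C6_lt_p).
exact: exists_good_refinement tau_gt0 tau_lt p_large mu_gt0 G_gcd E_neq0 p_prime p_notin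
  near a_near a_toward0.
Qed.
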